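(* For any optimal solution $\mathbf p$ (pure strategy profile maximizing $TR$), $TR(\mathbf p)\le \mu m\left(1-\frac{\mu}{n_1\phi+\mu}\right)$.
   Context: Network model: there are $m\ge 2$ source nodes $s_1,\dots,s_m$ and one destination $d$. Source $s_i$ has a set $N_i$ of $n_i$ users, with $n_1>n_2>\dots>n_m$. Each user generates an independent Poisson flow of packets of rate $\phi>0$; each direct link $(s_i,d)$ has service rate $\mu>0$; each sidelink loses packets independently with probability $q\in[0,1]$, and $\bar q=1-q$. A pure strategy of a user in $N_i$ is either the direct path (DP) $(s_i,d)$ or an indirect path (IP) $(s_i,s_j,d)$, $j\neq i$. For a pure profile, $u_i$ is the number of users of $N_i$ choosing DP and $v_i$ the number of users of other sources choosing an IP $(s_j,s_i,d)$. With $T_i=u_i\phi+v_i\bar q\phi$, the total traffic rate is $TR=\sum_i\frac{\mu T_i}{T_i+\mu}$. *)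

From HB Require Import structures.
From mathcomp Require Import all_boot all_order all_algebra.
Set Implicit Arguments. Unset Strict Implicit. Unset Printing Implicit Defensive.
Import Order.TTheory GRing.Theory Num.Theory.
Local Open Scope ring_scope.

(* Sources s_1..s_m are indexed by 'I_m (0-based: source s_{i+1} is index i).
   n : nat -> nat gives the number of users n_i of each source (only values
   below m matter).  A pure strategy of a user of source i is an element
   j : 'I_m: j = i encodes the direct path (s_i,d), j <> i encodes the
   indirect path (s_i,s_j,d). *)
Definition profile (m : nat) (n : nat -> nat) := forall i : 'I_m, 'I_(n i) -> 'I_m.

Definition u_cnt (m : nat) (n : nat -> nat) (p : profile m n) (i : 'I_m) : nat :=
  #|[set k : 'I_(n i) | p i k == i]|.

Definition v_cnt (m : nat) (n : nat -> nat) (p : profile m n) (i : 'I_m) : nat :=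
  (\sum_(j : 'I_m | j != i) #|[set k : 'I_(n j) | p j k == i]|)%N.

Definition Tload (R : realFieldType) (m : nat) (n : nat -> nat)
  (phi q : R) (p : profile m n) (i : 'I_m) : R :=
  (u_cnt p i)%:R * phi + (v_cnt p i)%:R * (1 - q) * phi.

Definition TR (R : realFieldType) (m : nat) (n : nat -> nat)
  (phi mu q : R) (p : profile m n) : R :=
  \sum_(i : 'I_m) mu * Tload phi q p i / (Tload phi q p i + mu).

Definition optimal (R : realFieldType) (m : nat) (n : nat -> nat)
  (phi mu q : R) (p : profile m n) : Prop :=
  forall p' : profile m n, TR phi mu q p' <= TR phi mu q p.

From HB Require Import structures.
From mathcomp Require Import all_boot all_order all_algebra.
From mathcomp Require Import ring lra.
Set Implicit Arguments. Unset Strict Implicit.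
Import Order.TTheory GRing.Theory Num.Theory.
Local Open Scope ring_scope.

(* The map x |-> mu x / (x + mu) is concave on [0, oo), so by its tangent
   line at c = n_1 phi the total traffic is at most m times its value at c as
   soon as the mean load is at most c.  Every user contributes at most phi to
   the load of exactly one link and no source has more than n_1 users, so the
   total load is at most m n_1 phi. *)

Lemma sat_le_tangent (R : realFieldType) (mu c T : R) :
  0 < mu -> 0 <= c -> 0 <= T ->
  mu * T / (T + mu) <= mu * (1 - mu / (c + mu)) + mu ^+ 2 / (c + mu) ^+ 2 * (T - c).
Proof.
move=> mu_gt0 c_ge0 T_ge0.
have Tmu_neq0 : T + mu != 0 by rewrite gt_eqF //; lra.
have cmu_neq0 : c + mu != 0 by rewrite gt_eqF //; lra.
rewrite -subr_ge0.
have -> : mu * (1 - mu / (c + mu)) + mu ^+ 2 / (c + mu) ^+ 2 * (T - c)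
          - mu * T / (T + mu) = mu ^+ 2 * (T - c) ^+ 2 / ((T + mu) * (c + mu) ^+ 2).
  by field; rewrite ?mulf_neq0 ?expf_neq0 ?Tmu_neq0 ?cmu_neq0.
apply: divr_ge0; first by rewrite mulr_ge0 ?sqr_ge0.
by rewrite mulr_ge0 ?sqr_ge0 //; lra.
Qed.

Lemma sum_sat_le_mean (R : realFieldType) (I : finType) (mu c : R) (T : I -> R) :
  0 < mu -> 0 <= c -> (forall i, 0 <= T i) -> \sum_i T i <= #|I|%:R * c ->
  \sum_i mu * T i / (T i + mu) <= #|I|%:R * (mu * (1 - mu / (c + mu))).
Proof.
move=> mu_gt0 c_ge0 T_ge0 sumT_le.
set K := mu ^+ 2 / (c + mu) ^+ 2.
have K_gt0 : 0 < K by rewrite divr_gt0 ?exprn_gt0 //; lra.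
apply: (@le_trans _ _ (\sum_i (mu * (1 - mu / (c + mu)) + K * (T i - c)))).
  by apply: ler_sum => i _; exact: sat_le_tangent.
rewrite mulr_natl big_split /= sumr_const -mulr_sumr gerDl.
by rewrite pmulr_rle0 // sumrB sumr_const -mulr_natl subr_le0.
Qed.

(* Every user routes its flow to exactly one link. *)
Lemma sum_u_v_cnt (m : nat) (n : nat -> nat) (p : profile m n) :
  (\sum_(i : 'I_m) (u_cnt p i + v_cnt p i) = \sum_(j : 'I_m) n j)%N.
Proof.
have users_on i : (u_cnt p i + v_cnt p i =
                   \sum_(j : 'I_m) #|[set k : 'I_(n j) | p j k == i]|)%N.
  by rewrite [in RHS](bigD1 i).
rewrite (eq_bigr _ (fun i _ => users_on i)) exchange_big /=.
apply: eq_bigr => j _.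
rewrite -[in RHS](card_ord (n j)) -sum1_card (partition_big (p j) xpredT) //=.
by apply: eq_bigr => i _; rewrite -sum1_card; apply: eq_bigl => k; rewrite inE.
Qed.

Lemma sum_le_card_mul_max (m : nat) (f : nat -> nat) :
  (forall j, (j < m)%N -> (f j <= f 0%N)%N) ->
  (\sum_(j : 'I_m) f j <= m * f 0%N)%N.
Proof.
move=> f_le; rewrite -[in leqRHS](card_ord m) -sum_nat_const.
by apply: leq_sum => j _; apply: f_le.
Qed.

Section Loads.

Variables (R : realFieldType) (m : nat) (n : nat -> nat) (phi q : R).
Variable p : profile m n.
Hypotheses (phi_gt0 : 0 < phi) (q_ge0 : 0 <= q) (q_le1 : q <= 1).

Lemma Tload_ge0 (i : 'I_m) : 0 <= Tload phi q p i.
Proof.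
have phi_ge0 : 0 <= phi := ltW phi_gt0.
by rewrite /Tload addr_ge0 ?mulr_ge0 ?ler0n ?subr_ge0.
Qed.

Lemma Tload_le (i : 'I_m) : Tload phi q p i <= (u_cnt p i + v_cnt p i)%:R * phi.
Proof.
rewrite /Tload natrD mulrDl lerD2l ler_pM2r //.
by rewrite -[leRHS]mulr1 ler_wpM2l ?ler0n // gerDl oppr_le0.
Qed.

Lemma sum_Tload_le :
  (forall j, (j < m)%N -> (n j <= n 0%N)%N) ->
  \sum_i Tload phi q p i <= #|'I_m|%:R * ((n 0%N)%:R * phi).
Proof.
move=> n_le_n0.
apply: (@le_trans _ _ (\sum_i (u_cnt p i + v_cnt p i)%:R * phi)).
  by apply: ler_sum => i _; exact: Tload_le.
rewrite -mulr_suml -natr_sum sum_u_v_cnt card_ord mulrA -natrM ler_pM2r //.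
by rewrite ler_nat sum_le_card_mul_max.
Qed.

End Loads.

Theorem lemma3 (R : realFieldType) (m : nat) (n : nat -> nat) (phi mu q : R)
  (hm : (2 <= m)%N)
  (hn : forall i j : nat, (i < j)%N -> (j < m)%N -> (n j < n i)%N)
  (hphi : 0 < phi) (hmu : 0 < mu) (hq0 : 0 <= q) (hq1 : q <= 1)
  (p : profile m n) (hopt : optimal phi mu q p) :
  TR phi mu q p <= mu * m%:R * (1 - mu / ((n 0%N)%:R * phi + mu)).
Proof.
have n_le_n0 j : (j < m)%N -> (n j <= n 0%N)%N.
  by case: (posnP j) => [-> // | j_gt0 j_lt_m]; exact/ltnW/hn.
have c_ge0 : 0 <= (n 0%N)%:R * phi by rewrite mulr_ge0 ?ler0n ?ltW.
have := sum_sat_le_mean hmu c_ge0 (Tload_ge0 p hphi hq1) (sum_Tload_le p hphi hq0 n_le_n0).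
by rewrite card_ord mulrCA mulrA.
Qed.
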